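(* Let $L$ be a reduced Latin square of order $n$ with rows $\sigma_1,\dots,\sigma_n$ and columns $\pi_1,\dots,\pi_n$ (as permutations). For each $k\in[n]$ let $I_k$ be the set of permutations $\alpha\in S_n$ such that for every $i\in[n]$ the permutations $\sigma_{\alpha(i)}$ and $\sigma_k^{-1}\sigma_i$ have the same cycle structure (this set is empty unless the multiset of cycle structures of $\{\sigma_k^{-1}\sigma_i\}_{i=1}^n$ coincides with the multiset of cycle structures of $\{\sigma_i\}_{i=1}^n$). For $\alpha\in S_n$ and $j\in[n]$ let $\Theta_{\alpha,j}=(\alpha,\ \alpha\pi_j\sigma_{\alpha^{-1}(1)}^{-1},\ \alpha\pi_j)$. Then $$\mathfrak A(L)=\{\Theta_{\alpha,j}:\ \alpha\in\textstyle\bigcup_{k=1}^n I_k,\ j\in[n],\ \Theta_{\alpha,j}(L)=L\}.$$ In other words, the algorithm that computes the cycle structures of the rows, forms the sets $I_k$, and for each $\alpha\in\bigcup_k I_k$ and each $j$ tests whether $\Theta_{\alpha,j}(L)=L$, outputs exactly the autotopy group $\mathfrak A(L)$.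
   Context: A Latin square of order $n$ is an $n\times n$ array with entries in $[n]$, each symbol once in each row and column. Permutations compose right to left. An isotopism $(\alpha,\beta,\gamma)\in S_n^3$ acts by $(\alpha,\beta,\gamma)(L)=L'$ with $L'(\alpha(r),\beta(c))=\gamma(L(r,c))$; $\mathfrak A(L)=\{\Theta\in S_n^3:\Theta(L)=L\}$ is the autotopy group. Rows and columns are viewed as permutations: if symbol $i$ appears in the $j$th place of a row (column) $\sigma$, then $\sigma(i)=j$; so row $r$ is $\sigma_r$ with $\sigma_r(L(r,c))=c$ and column $c$ is $\pi_c$ with $\pi_c(L(r,c))=r$. $L$ is reduced if its first row and first column are the identity permutation. The cycle structure of a permutation is the multiset of lengths of cycles in its disjoint cycle decomposition. *)

From mathcomp Require Import all_boot all_fingroup.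
Set Implicit Arguments. Unset Strict Implicit. Unset Printing Implicit Defensive.
Local Open Scope group_scope.

(* Symbols/rows/columns [n] are represented by 'I_m (0-based: paper's i is i-1). *)
Definition lsquare (m : nat) := 'I_m -> 'I_m -> 'I_m.

Definition is_latin m (L : lsquare m) : Prop :=
  (forall r, injective (L r)) /\ (forall c, injective (fun r => L r c)).

(* Paper composition (right to left): (pcomp a b) x = a (b x).
   MathComp's group product is left-to-right: (b * a) x = a (b x). *)
Definition pcomp (T : finType) (a b : {perm T}) : {perm T} := (b * a)%g.

(* Isotopism Θ = (α,β,γ) acting on L: L'(α r, β c) = γ (L r c). *)
Definition isotope m (a b g : {perm 'I_m}) (L : lsquare m) : lsquare m :=
  fun r' c' => g (L (a^-1 r') (b^-1 c')).

Definition fixes m (T : {perm 'I_m} * {perm 'I_m} * {perm 'I_m}) (L : lsquare m) : Prop :=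
  forall r c, isotope T.1.1 T.1.2 T.2 L r c = L r c.

Definition autotopy m (L : lsquare m) (T : {perm 'I_m} * {perm 'I_m} * {perm 'I_m}) : Prop :=
  fixes T L.

Definition is_rows m (L : lsquare m) (sigma : 'I_m -> {perm 'I_m}) : Prop :=
  forall r c, sigma r (L r c) = c.
Definition is_cols m (L : lsquare m) (pi : 'I_m -> {perm 'I_m}) : Prop :=
  forall r c, pi c (L r c) = r.

Definition is_reduced n (L : lsquare n.+1) : Prop :=
  (forall c, L ord0 c = c) /\ (forall r, L r ord0 = r).

(* Cycle structure: the multiset of cycle lengths, as a sorted list. *)
Definition cycle_structure (T : finType) (s : {perm T}) : seq nat :=
  sort leq (map (fun C : {set T} => #|C|)%N (enum (porbits s))).

Definition Iset m (sigma : 'I_m -> {perm 'I_m}) (k : 'I_m) (a : {perm 'I_m}) : Prop :=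
  forall i, cycle_structure (sigma (a i)) = cycle_structure (pcomp (sigma k)^-1 (sigma i)).

Definition Theta n (sigma pi : 'I_n.+1 -> {perm 'I_n.+1}) (a : {perm 'I_n.+1}) (j : 'I_n.+1)
  : {perm 'I_n.+1} * {perm 'I_n.+1} * {perm 'I_n.+1} :=
  (a, pcomp (pcomp a (pi j)) (sigma (a^-1 ord0))^-1, pcomp a (pi j)).

From Pilot Require Import Defs.
From mathcomp Require Import all_boot all_fingroup.
Set Implicit Arguments. Unset Strict Implicit. Unset Printing Implicit Defensive.
Local Open Scope group_scope.

(* An autotopy (a, b, g) of L turns the row permutations into
   sigma_(a r) = g^-1 sigma_r b (MathComp products read left to right), and
   the columns likewise.  Since L is reduced, sigma_(a^-1 1) and pi_(b^-1 1)
   are the identity, which forces g = a pi_j and b = a pi_j sigma_(a^-1 1)^-1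
   with j = b^-1 1; substituting back, each sigma_(a i) is the conjugate of
   sigma_(a^-1 1)^-1 sigma_i by g, so it has the same cycle structure. *)

Lemma perm_enum_imset (T T' : finType) (f : T -> T') (A : {set T}) :
  injective f -> perm_eq (enum (f @: A)) (map f (enum A)).
Proof.
move=> f_inj; apply: uniq_perm; rewrite ?(map_inj_uniq f_inj) ?enum_uniq //.
move=> y; rewrite mem_enum; apply/imsetP/mapP => -[x Ax ->]; exists x => //.
  by rewrite mem_enum.
by rewrite -mem_enum.
Qed.

Section CycleStructure.

Variable T : finType.

Lemma porbitJ (s g : {perm T}) x : porbit (s ^ g) (g x) = g @: porbit s x.
Proof.
apply/setP => y; apply/porbitP/imsetP => [[i ->] | [z /porbitP[i ->] ->]].
  by exists ((s ^+ i) x); rewrite ?mem_porbit // -conjXg permJ.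
by exists i; rewrite -conjXg permJ.
Qed.

Lemma porbitsJ (s g : {perm T}) :
  porbits (s ^ g) = (fun C : {set T} => g @: C) @: porbits s.
Proof.
apply/setP => C; apply/imsetP/imsetP => [[x _ ->] | [D /imsetP[x _ ->] ->]].
  by exists (porbit s (g^-1 x)); rewrite ?imset_f // -porbitJ permKV.
by exists (g x); rewrite ?porbitJ.
Qed.

Lemma cycle_structureJ (s g : {perm T}) :
  cycle_structure (s ^ g) = cycle_structure s.
Proof.
rewrite /cycle_structure porbitsJ; apply/perm_sortP.
- exact: leq_total.
- exact: leq_trans.
- exact: anti_leq.
rewrite (permPl (perm_map _ (perm_enum_imset _ (imset_inj (@perm_inj _ g))))).
rewrite -map_comp; under eq_map => C do rewrite /= (card_imset _ (@perm_inj _ g)).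
exact: perm_refl.
Qed.

End CycleStructure.

Section Autotopy.

Variables (n : nat) (L : lsquare n.+1) (sigma pi : 'I_n.+1 -> {perm 'I_n.+1}).
Hypotheses (L_reduced : is_reduced L) (L_rows : is_rows L sigma)
  (L_cols : is_cols L pi).

Lemma row_permK r x : L r (sigma r x) = x.
Proof. by apply: (@perm_inj _ (sigma r)); rewrite L_rows. Qed.

Lemma col_permK c x : L (pi c x) c = x.
Proof. by apply: (@perm_inj _ (pi c)); rewrite L_cols. Qed.

Lemma row_perm0 : sigma ord0 = 1.
Proof. by apply/permP => c; rewrite perm1 -{1}(L_reduced.1 c) L_rows. Qed.

Lemma col_perm0 : pi ord0 = 1.
Proof. by apply/permP => r; rewrite perm1 -{1}(L_reduced.2 r) L_cols. Qed.

Variables a b g : {perm 'I_n.+1}.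
Hypothesis abg_autotopy : autotopy L (a, b, g).

Lemma autotopyE r c : L (a r) (b c) = g (L r c).
Proof. by rewrite -abg_autotopy /isotope /= !permK. Qed.

Lemma autotopy_row_perm r : sigma (a r) = g^-1 * sigma r * b.
Proof.
apply/permP => c; rewrite !permM -{1}(permKV g c).
by rewrite -{1}(row_permK r (g^-1 c)) -autotopyE L_rows.
Qed.

Lemma autotopy_col_perm c : pi (b c) = g^-1 * pi c * a.
Proof.
apply/permP => r; rewrite !permM -{1}(permKV g r).
by rewrite -{1}(col_permK c (g^-1 r)) -autotopyE L_cols.
Qed.

Lemma autotopy_gammaE : g = pi (b^-1 ord0) * a.
Proof.
have := autotopy_col_perm (b^-1 ord0).
rewrite permKV col_perm0 -mulgA => /esym/eqP.
by rewrite -eq_invg_mul invgK => /eqP.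
Qed.

Lemma autotopy_betaE : b = (sigma (a^-1 ord0))^-1 * g.
Proof.
have := autotopy_row_perm (a^-1 ord0).
rewrite permKV row_perm0 => /esym/eqP.
by rewrite -eq_invg_mul invMg invgK => /eqP.
Qed.

Lemma autotopy_Theta : (a, b, g) = Theta sigma pi a (b^-1 ord0).
Proof. by rewrite /Theta /Defs.pcomp -autotopy_gammaE -autotopy_betaE. Qed.

Lemma autotopy_Iset : Iset sigma (a^-1 ord0) a.
Proof.
move=> i; rewrite autotopy_row_perm autotopy_betaE /Defs.pcomp.
by rewrite mulgA -[g^-1 * _ * _]mulgA -mulgA -conjgE cycle_structureJ.
Qed.

End Autotopy.

Theorem theorem5p2 (n : nat) (L : lsquare n.+1)
  (sigma pi : 'I_n.+1 -> {perm 'I_n.+1}) :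
  is_latin L -> is_reduced L -> is_rows L sigma -> is_cols L pi ->
  forall T : {perm 'I_n.+1} * {perm 'I_n.+1} * {perm 'I_n.+1},
    autotopy L T <->
    exists (a : {perm 'I_n.+1}) (j : 'I_n.+1),
      (exists k, Iset sigma k a) /\ T = Theta sigma pi a j /\ fixes (Theta sigma pi a j) L.
Proof.
(* Latinness is already implied by the existence of row and column permutations. *)
move=> _ L_reduced L_rows L_cols [[a b] g]; split => [abg_autotopy | ].
  have abg_Theta := autotopy_Theta L_reduced L_rows L_cols abg_autotopy.
  exists a, (b^-1 ord0); split; last by rewrite -abg_Theta.
  by exists (a^-1 ord0); apply: autotopy_Iset abg_autotopy.
by move=> [a' [j [_ [-> Theta_fixes_L]]]].
Qed.
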